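(* Let $\mathbb{A}$ be a reduced medial algebra of dimension at least $2$ over a field of characteristic not $2,3$. If $c_1$ is a semi-simple nonzero idempotent, then for any nonzero idempotent $c_2$ the idempotent $c_1c_2$ is also semi-simple and $\operatorname{spec}(c_1)=\operatorname{spec}(c_1c_2)$.
   Context: All algebras commutative, possibly nonassociative, finite-dimensional. Medial: $(xy)(zw)=(xz)(yw)$ identically. Reduced: $\ker L_c=0$ for every nonzero idempotent $c$, where $L_c:x\mapsto cx$. $\operatorname{spec}(c)$ is the multiset of roots of the characteristic polynomial of $L_c$. An idempotent $c$ is semi-simple if $\mathbb{A}$ is the direct sum of the eigenspaces of $L_c$. *)

From HB Require Import structures.
From mathcomp Require Import all_boot all_order all_algebra.
Set Implicit Arguments. Unset Strict Implicit. Unset Printing Implicit Defensive.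
Import Order.TTheory GRing.Theory Num.Theory.
Local Open Scope ring_scope.

(* A finite-dimensional (possibly nonassociative) algebra over a field K of
   dimension n is modelled as K^n = 'rV[K]_n with a product
   mul : 'rV_n -> 'rV_n -> 'rV_n, bilinear hypotheses stated in the theorem. *)

Definition Lmx (K : fieldType) (n : nat)
  (mul : 'rV[K]_n -> 'rV[K]_n -> 'rV[K]_n) (c : 'rV[K]_n) : 'M[K]_n :=
  lin1_mx (mul c).

Definition is_idempotent (K : fieldType) (n : nat)
  (mul : 'rV[K]_n -> 'rV[K]_n -> 'rV[K]_n) (c : 'rV[K]_n) : Prop :=
  mul c c = c.

Definition medial (K : fieldType) (n : nat)
  (mul : 'rV[K]_n -> 'rV[K]_n -> 'rV[K]_n) : Prop :=
  forall x y z w, mul (mul x y) (mul z w) = mul (mul x z) (mul y w).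

Definition reduced (K : fieldType) (n : nat)
  (mul : 'rV[K]_n -> 'rV[K]_n -> 'rV[K]_n) : Prop :=
  forall c, is_idempotent mul c -> c != 0 ->
    forall x, mul c x = 0 -> x = 0.

Definition semisimple (K : fieldType) (n : nat)
  (mul : 'rV[K]_n -> 'rV[K]_n -> 'rV[K]_n) (c : 'rV[K]_n) : Prop :=
  exists2 s : seq K, uniq s &
    mxdirect (\sum_(a <- s) eigenspace (Lmx mul c) a)
    /\ (\sum_(a <- s) eigenspace (Lmx mul c) a :=: 1%:M)%MS.

(* spec(c): the multiset of roots of the characteristic polynomial of L_c;
   two such multisets (over an algebraic closure) coincide iff the monic
   characteristic polynomials coincide. *)
Definition spec (K : fieldType) (n : nat)
  (mul : 'rV[K]_n -> 'rV[K]_n -> 'rV[K]_n) (c : 'rV[K]_n) : {poly K} :=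
  char_poly (Lmx mul c).

(* Mediality with c2 c2 = c2 gives (c1 c2)(c2 x) = (c2 c1)(c2 x) = (c2 c2)(c1 x)
   = c2 (c1 x), i.e. L_(c1 c2) L_c2 = L_c2 L_c1, and L_c2 is invertible because
   the algebra is reduced. Hence L_(c1 c2) is similar to L_c1: the two share
   their characteristic polynomial, and L_(c1 c2) is diagonalizable (which is
   what semi-simplicity of an idempotent means) as soon as L_c1 is. *)

From HB Require Import structures.
From mathcomp Require Import all_boot all_order all_algebra.
Set Implicit Arguments.
Unset Strict Implicit.
Unset Printing Implicit Defensive.

Import GRing.Theory.
Local Open Scope ring_scope.

Section Similarity.
Variables (K : fieldType) (n : nat).
Implicit Types (A B P : 'M[K]_n).

Lemma char_poly_similar A B P : P \in unitmx -> similar P B A ->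
  char_poly B = char_poly A.
Proof.
move=> Pu /eqP <-; rewrite conjumx // /char_poly /char_poly_mx.
set f := map_mx (@polyC K).
have -> : 'X%:M - f (P *m B *m invmx P) = f P *m ('X%:M - f B) *m f (invmx P).
  rewrite /f !map_mxM mulmxBr mulmxBl; congr (_ - _).
  by rewrite -mulmxA -scalar_mxC mulmxA -map_mxM mulmxV // map_mx1 mul1mx.
rewrite !det_mulmx /f !det_map_mx mulrC mulrA -rmorphM -det_mulmx mulVmx //.
by rewrite det1 rmorph1 mul1r.
Qed.

Lemma diagonalizable_similar A B P : P \in unitmx -> similar P B A ->
  diagonalizable A -> diagonalizable B.
Proof.
move=> Pu /eqP BPA [Q Qu AQ]; exists (Q *m P); first by rewrite unitmx_mul Qu.
by rewrite /similar_to conjuMumx // BPA.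
Qed.

Lemma mxdirect_sum_eigenspace_seq A (s : seq K) : uniq s ->
  mxdirect (\sum_(a <- s) eigenspace A a).
Proof.
move=> us; apply/mxdirectP => /=.
rewrite (big_nth 0) big_mkord [in RHS](big_nth 0) big_mkord.
apply/mxdirectP/mxdirect_sum_eigenspace => i j _ _ /(uniqP 0 us) ij.
by apply/val_inj/ij; rewrite inE.
Qed.

End Similarity.

Section MedialAlgebra.
Variables (K : fieldType) (n : nat) (mul : 'rV[K]_n -> 'rV[K]_n -> 'rV[K]_n).
Hypothesis mul_linear : forall x, linear (mul x).

Lemma semisimple_diagonalizable c :
  semisimple mul c <-> diagonalizable (Lmx mul c).
Proof.
split=> [[s us [_ full]]|/diagonalizablePeigen[s us full]].
  by apply/diagonalizablePeigen; exists s.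
by exists s => //; split=> //; apply: mxdirect_sum_eigenspace_seq.
Qed.

Lemma mul_Lmx c x : x *m Lmx mul c = mul c x.
Proof.
pose f : {linear 'rV[K]_n -> 'rV[K]_n} :=
  HB.pack (mul c) (GRing.isLinear.Build K _ _ *:%R (mul c) (mul_linear c)).
exact: (mul_rV_lin1 f).
Qed.

Lemma Lmx_unit c : reduced mul -> is_idempotent mul c -> c != 0 ->
  Lmx mul c \in unitmx.
Proof.
move=> red idc c0; rewrite -row_free_unit -kermx_eq0 -submx0.
apply/row_subP => i; have /sub_kermxP := row_sub i (kermx (Lmx mul c)).
by rewrite mul_Lmx => /(red c idc c0) ->; rewrite sub0mx.
Qed.

Hypotheses (mulC : forall x y, mul x y = mul y x) (mulmed : medial mul).

Lemma similar_Lmx_mul_idem c1 c2 :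
  is_idempotent mul c2 -> Lmx mul c2 \in unitmx ->
  similar (Lmx mul c2) (Lmx mul (mul c1 c2)) (Lmx mul c1).
Proof.
move=> idc2 Lc2u; apply/(similarP Lc2u)/row_matrixP => i.
rewrite !rowE !mulmxA !mul_Lmx.
by have := mulmed c2 c1 c2 (delta_mx 0 i); rewrite (mulC c2 c1) idc2.
Qed.

End MedialAlgebra.

Theorem proposition4p3 (K : fieldType) (n : nat)
  (mul : 'rV[K]_n -> 'rV[K]_n -> 'rV[K]_n)
  (mul_linear : forall x, linear (mul x))
  (mulC : forall x y, mul x y = mul y x)
  (hmed : medial mul)
  (hred : reduced mul)
  (hdim : (2 <= n)%N)
  (hchar2 : (2 \notin [pchar K])%N)
  (hchar3 : (3 \notin [pchar K])%N)
  (c1 c2 : 'rV[K]_n)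
  (h1 : is_idempotent mul c1) (h1nz : c1 != 0) (h1ss : semisimple mul c1)
  (h2 : is_idempotent mul c2) (h2nz : c2 != 0) :
  semisimple mul (mul c1 c2) /\ spec mul c1 = spec mul (mul c1 c2).
Proof.
have Lc2u := Lmx_unit mul_linear hred h2 h2nz.
have sim := similar_Lmx_mul_idem mul_linear mulC hmed c1 h2 Lc2u.
split; last by rewrite /spec (char_poly_similar Lc2u sim).
apply/semisimple_diagonalizable/(diagonalizable_similar Lc2u sim).
exact/semisimple_diagonalizable.
Qed.
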